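(* Let $\mathcal C$ be a class of topological semigroups with $\mathsf{T_{z}S}\subseteq\mathcal C\subseteq\mathsf{T_{1}S}$. A semigroup $X$ is $\mathcal C$-closed if $X$ admits a semigroup homomorphism $h:X\to E$ to a chain-finite semilattice $E$ such that for every $e\in E$ the subsemigroup $h^{-1}(e)$ is $\mathcal C$-closed.
   Context: A topological semigroup is a topological space with a continuous associative binary operation. $\mathsf{T_{1}S}$ denotes the class of topological semigroups satisfying the $T_1$ separation axiom (finite sets are closed); $\mathsf{T_{z}S}$ denotes the class of Hausdorff zero-dimensional (having a base of clopen sets) topological semigroups. A topological semigroup $X$ is $\mathcal C$-closed if for every isomorphic topological embedding $h:X\to Y$ into a topological semigroup $Y\in\mathcal C$ the image $h[X]$ is closed in $Y$; a (plain) semigroup is $\mathcal C$-closed if it is $\mathcal C$-closed when endowed with the discrete topology. A semilattice is a commutative semigroup in which every element is idempotent. A subset $C$ of a semigroup is a chain if $xy\in\{x,y\}$ for all $x,y\in C$; a semigroup is chain-finite if it contains no infinite chains. *)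

From Stdlib Require Import List ProofIrrelevance.

Record Semigroup := {
  sg_carrier :> Type;
  sg_mul : sg_carrier -> sg_carrier -> sg_carrier;
  sg_assoc : forall x y z, sg_mul x (sg_mul y z) = sg_mul (sg_mul x y) z
}.

Definition is_topology (X : Type) (opn : (X -> Prop) -> Prop) : Prop :=
  opn (fun _ => True) /\
  (forall (I : Type) (U : I -> X -> Prop),
      (forall i, opn (U i)) -> opn (fun x => exists i, U i x)) /\
  (forall U V, opn U -> opn V -> opn (fun x => U x /\ V x)).

(* A topological semigroup: a topological space with a continuous associative
   operation; continuity of mul : X x X -> X (product topology) is written out:
   every neighbourhood W of x*y contains U*V for open neighbourhoods U of x and
   V of y. *)
Record TopSemigroup := {
  ts_carrier :> Type;
  ts_open : (ts_carrier -> Prop) -> Prop;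
  ts_mul : ts_carrier -> ts_carrier -> ts_carrier;
  ts_topology : is_topology ts_carrier ts_open;
  ts_assoc : forall x y z, ts_mul x (ts_mul y z) = ts_mul (ts_mul x y) z;
  ts_mul_cont : forall x y (W : ts_carrier -> Prop), ts_open W -> W (ts_mul x y) ->
     exists U V : ts_carrier -> Prop, ts_open U /\ ts_open V /\ U x /\ V y /\
       (forall a b, U a -> V b -> W (ts_mul a b))
}.

Definition ts_closed (Y : TopSemigroup) (F : Y -> Prop) : Prop :=
  ts_open Y (fun y => ~ F y).

Definition is_T1 (Y : TopSemigroup) : Prop :=
  forall l : list Y, ts_closed Y (fun y => In y l).

Definition is_Hausdorff (Y : TopSemigroup) : Prop :=
  forall x y : Y, x <> y -> exists U V, ts_open Y U /\ ts_open Y V /\ U x /\ V y /\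
     (forall z, U z -> V z -> False).

Definition is_zero_dim (Y : TopSemigroup) : Prop :=
  forall (U : Y -> Prop) (x : Y), ts_open Y U -> U x ->
    exists V : Y -> Prop, ts_open Y V /\ ts_closed Y V /\ V x /\ (forall z, V z -> U z).

Definition in_T1S (Y : TopSemigroup) : Prop := is_T1 Y.
Definition in_TzS (Y : TopSemigroup) : Prop := is_Hausdorff Y /\ is_zero_dim Y.

(* isomorphic topological embedding: injective continuous homomorphism that is a
   homeomorphism onto its image (with the subspace topology) *)
Definition ts_embedding (X Y : TopSemigroup) (h : X -> Y) : Prop :=
  (forall x y, h (ts_mul X x y) = ts_mul Y (h x) (h y)) /\
  (forall x y, h x = h y -> x = y) /\
  (forall V, ts_open Y V -> ts_open X (fun x => V (h x))) /\
  (forall U, ts_open X U -> exists V, ts_open Y V /\ forall x, U x <-> V (h x)).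

Definition C_closed (C : TopSemigroup -> Prop) (X : TopSemigroup) : Prop :=
  forall (Y : TopSemigroup), C Y -> forall h : X -> Y, ts_embedding X Y h ->
    ts_closed Y (fun y => exists x, h x = y).

Definition discrete_ts (S : Semigroup) : TopSemigroup.
Proof.
  refine {| ts_carrier := S; ts_open := fun _ => True; ts_mul := sg_mul S |}.
  - repeat split; auto.
  - exact (sg_assoc S).
  - intros x y W _ HW. exists (fun a => a = x), (fun b => b = y).
    repeat split; auto. intros a b -> ->. exact HW.
Defined.

Definition sg_C_closed (C : TopSemigroup -> Prop) (S : Semigroup) : Prop :=
  C_closed C (discrete_ts S).

Definition is_semilattice (E : Semigroup) : Prop :=
  (forall x y : E, sg_mul E x y = sg_mul E y x) /\ (forall x : E, sg_mul E x x = x).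

Definition is_chain (E : Semigroup) (Ch : E -> Prop) : Prop :=
  forall x y, Ch x -> Ch y -> sg_mul E x y = x \/ sg_mul E x y = y.

Definition is_finite_set (T : Type) (A : T -> Prop) : Prop :=
  exists l : list T, forall x, A x -> In x l.

Definition chain_finite (E : Semigroup) : Prop :=
  forall Ch, is_chain E Ch -> is_finite_set E Ch.

Definition sg_hom (X E : Semigroup) (h : X -> E) : Prop :=
  forall x y, h (sg_mul X x y) = sg_mul E (h x) (h y).

Definition preimage_sg (X E : Semigroup) (h : X -> E) (hh : sg_hom X E h)
  (e : E) (he : sg_mul E e e = e) : Semigroup.
Proof.
  refine {| sg_carrier := {x : X | h x = e};
            sg_mul := fun a b => exist (fun x => h x = e)
               (sg_mul X (proj1_sig a) (proj1_sig b))
               (eq_trans (hh _ _) (eq_trans (f_equal2 (sg_mul E) (proj2_sig a) (proj2_sig b)) he)) |}.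
  - intros [a Ha] [b Hb] [c Hc]. simpl.
    apply eq_sig_hprop.
    + intros x p q. apply proof_irrelevance.
    + simpl. apply sg_assoc.
Defined.

(* Let f : X -> Y embed the discrete semigroup X into Y in C and let y lie in the
   closure of f(X).  Writing X^1 = option X for X with an adjoined identity, we
   show by well-founded induction on the rank h(c) of c in X^1 that the map
   b |-> h(c b) is constant on the points f(b) near y.  For this we pick a
   maximal g in E such that g <= h(c b) for b arbitrarily close to y; then
   c y y is adherent to f(h^-1(g)), hence equals f(x0) with h(x0) = g because
   that fibre is closed, and since f(x0) is isolated in f(X), continuity gives
   h(c b) = h(c b b) = h(x0) = g for b near y.  For c = 1 this puts y in the
   closure of one fibre, so y lies in f(X).  Chain-finiteness enters only
   through the well-foundedness of < and > on E; note that the argument needs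
   no separation axiom on the class C. *)
From Stdlib Require Import List ProofIrrelevance Classical ClassicalEpsilon
  FunctionalExtensionality PropExtensionality Arith Lia Wellfounded.

Lemma wf_of_no_descending_sequence {T : Type} (R : T -> T -> Prop) :
  (forall x : nat -> T, ~ (forall n, R (x (S n)) (x n))) -> well_founded R.
Proof.
  intros H a. apply NNPP. intro Hna.
  assert (step : forall z : {z | ~ Acc R z}, {w | ~ Acc R w /\ R w (proj1_sig z)}).
  { intros [z Hz]. apply constructive_indefinite_description. simpl.
    apply NNPP; intro Hno. apply Hz. constructor. intros w Hw.
    apply NNPP. intro Hw'. apply Hno. exists w; auto. }
  pose (next := fun z : {z | ~ Acc R z} =>
     exist (fun w => ~ Acc R w) (proj1_sig (step z)) (proj1 (proj2_sig (step z)))).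
  pose (sq := fun n => nat_rect (fun _ => {z | ~ Acc R z}) (exist _ a Hna)
                                (fun _ z => next z) n).
  apply (H (fun n => proj1_sig (sq n))). intros n. simpl.
  exact (proj2 (proj2_sig (step (sq n)))).
Qed.

Lemma injective_range_infinite {T : Type} (x : nat -> T) :
  (forall n k, x n = x k -> n = k) -> ~ is_finite_set T (fun z => exists n, x n = z).
Proof.
  intros Hinj [l Hl].
  assert (HN : NoDup (map x (seq 0 (S (length l))))).
  { apply NoDup_map_NoDup_ForallPairs; [intros a b _ _; apply Hinj | apply seq_NoDup]. }
  apply NoDup_incl_length with (l' := l) in HN.
  - rewrite length_map, length_seq in HN. lia.
  - intros z Hz. apply in_map_iff in Hz. destruct Hz as [n [<- _]]. apply Hl. eauto.
Qed.

Lemma descending_transitive {T : Type} (R : T -> T -> Prop)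
  (Rtrans : forall a b c, R a b -> R b c -> R a c) (x : nat -> T) :
  (forall n, R (x (S n)) (x n)) -> forall n k, n < k -> R (x k) (x n).
Proof.
  intros Hx n k. induction k as [|k IH]; intro Hnk; [lia|].
  destruct (Nat.eq_dec n k) as [->|Hne]; [exact (Hx k)|].
  apply Rtrans with (x k); [exact (Hx k) | apply IH; lia].
Qed.

Lemma wf_minimal {T : Type} (R : T -> T -> Prop) (wf : well_founded R)
  (P : T -> Prop) (a : T) : P a -> exists g, P g /\ forall w, P w -> ~ R w g.
Proof.
  induction (wf a) as [a _ IH]. intro Ha.
  destruct (classic (exists w, P w /\ R w a)) as [[w [Hw Hr]]|Hn].
  - exact (IH w Hr Hw).
  - exists a. split; auto. intros w Hw Hr. apply Hn. eauto.
Qed.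

Definition opt_lt {A : Type} (R : A -> A -> Prop) (d c : option A) : Prop :=
  match d, c with
  | Some a, None => True
  | Some a, Some b => R a b
  | _, _ => False
  end.

Lemma opt_lt_wf {A : Type} (R : A -> A -> Prop) :
  well_founded R -> well_founded (opt_lt R).
Proof.
  intro HR.
  assert (Hsome : forall a, Acc (opt_lt R) (Some a)).
  { intro a. induction (HR a) as [a _ IH]. constructor.
    intros [d|] Hd; simpl in Hd; [exact (IH d Hd) | contradiction]. }
  intros [a|]; [apply Hsome|]. constructor.
  intros [d|] Hd; [apply Hsome | contradiction].
Qed.

Section SemilatticeOrder.
Variable E : Semigroup.
Hypothesis hE : is_semilattice E.

Definition sle (a b : E) : Prop := sg_mul E a b = a.
Definition slt (a b : E) : Prop := sle a b /\ a <> b.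

Lemma sle_refl (a : E) : sle a a.
Proof. apply (proj2 hE). Qed.

Lemma sle_trans (a b c : E) : sle a b -> sle b c -> sle a c.
Proof.
  unfold sle; intros Hab Hbc. rewrite <- Hab at 1. rewrite <- sg_assoc, Hbc.
  exact Hab.
Qed.

Lemma sle_antisym (a b : E) : sle a b -> sle b a -> a = b.
Proof. unfold sle; intros H1 H2. rewrite <- H1, (proj1 hE). exact H2. Qed.

Lemma sle_mul_l (a b : E) : sle (sg_mul E a b) a.
Proof.
  unfold sle. rewrite <- sg_assoc, ((proj1 hE) b a), sg_assoc, (proj2 hE).
  reflexivity.
Qed.

Lemma sle_mul_r (a b : E) : sle (sg_mul E a b) b.
Proof. unfold sle. rewrite <- sg_assoc, (proj2 hE). reflexivity. Qed.

Lemma sle_glb (g a b : E) : sle g a -> sle g b -> sle g (sg_mul E a b).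
Proof. unfold sle; intros H1 H2. rewrite sg_assoc, H1. exact H2. Qed.

Lemma sle_mul_inv (g a b : E) : sle g (sg_mul E a b) -> sle g b.
Proof. intro H. apply sle_trans with (sg_mul E a b); [exact H | apply sle_mul_r]. Qed.

Lemma sle_self_mul (a b : E) : sle a (sg_mul E a b) -> sg_mul E a b = a.
Proof. intro H. apply sle_antisym; [apply sle_mul_l | exact H]. Qed.

Lemma slt_trans (a b c : E) : slt a b -> slt b c -> slt a c.
Proof.
  intros [Hab Hne1] [Hbc Hne2]. split; [exact (sle_trans a b c Hab Hbc)|].
  intros ->. apply Hne2, sle_antisym; auto.
Qed.

Hypothesis hEf : chain_finite E.

(* In a chain-finite semilattice every strict order whose related elements are
   comparable is well-founded: a descending sequence would be an infinite
   chain. *)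
Lemma chain_finite_wf (R : E -> E -> Prop)
  (Rtrans : forall a b c, R a b -> R b c -> R a c)
  (Rirrefl : forall a, ~ R a a)
  (Rcomparable : forall a b, R a b -> sg_mul E a b = a \/ sg_mul E a b = b) :
  well_founded R.
Proof.
  apply wf_of_no_descending_sequence. intros x Hx.
  pose proof (descending_transitive R Rtrans x Hx) as Hlt.
  apply (injective_range_infinite x).
  - intros n k Heq. destruct (lt_eq_lt_dec n k) as [[Hnk|Hnk]|Hkn]; auto; exfalso.
    + apply (Rirrefl (x n)). rewrite Heq at 1. exact (Hlt n k Hnk).
    + apply (Rirrefl (x n)). rewrite Heq at 2. exact (Hlt k n Hkn).
  - apply hEf. intros a b [n <-] [k <-].
    destruct (lt_eq_lt_dec n k) as [[Hnk| ->]|Hkn].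
    + rewrite (proj1 hE). destruct (Rcomparable _ _ (Hlt n k Hnk)); auto.
    + left. apply (proj2 hE).
    + exact (Rcomparable _ _ (Hlt k n Hkn)).
Qed.

Lemma slt_wf : well_founded slt.
Proof.
  apply chain_finite_wf.
  - exact slt_trans.
  - intros a [_ Hne]. exact (Hne eq_refl).
  - intros a b [Hab _]. left. exact Hab.
Qed.

Lemma sgt_wf : well_founded (fun a b => slt b a).
Proof.
  apply chain_finite_wf.
  - intros a b c Hab Hbc. exact (slt_trans c b a Hbc Hab).
  - intros a [_ Hne]. exact (Hne eq_refl).
  - intros a b [Hba _]. right. rewrite (proj1 hE). exact Hba.
Qed.

Lemma exists_bottom (e0 : E) : exists m, forall b, sle m b.
Proof.
  destruct (wf_minimal slt slt_wf (fun _ => True) e0 I) as [m [_ Hm]].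
  exists m. intro b. apply NNPP. intro Hne.
  apply (Hm (sg_mul E m b) I). split; [apply sle_mul_l | exact Hne].
Qed.

End SemilatticeOrder.

Lemma open_full (Y : TopSemigroup) : ts_open Y (fun _ => True).
Proof. exact (proj1 (ts_topology Y)). Qed.

Lemma open_inter (Y : TopSemigroup) (U V : Y -> Prop) :
  ts_open Y U -> ts_open Y V -> ts_open Y (fun x => U x /\ V x).
Proof. apply (proj2 (proj2 (ts_topology Y))). Qed.

Lemma open_of_local (Y : TopSemigroup) (P : Y -> Prop) :
  (forall z, P z -> exists U, ts_open Y U /\ U z /\ forall w, U w -> P w) ->
  ts_open Y P.
Proof.
  intros H. destruct (ts_topology Y) as [_ [Hunion _]].
  pose (I := {U : Y -> Prop | ts_open Y U /\ forall w, U w -> P w}).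
  specialize (Hunion I (fun i => proj1_sig i) (fun i => proj1 (proj2_sig i))).
  replace P with (fun x => exists i : I, proj1_sig i x); [exact Hunion|].
  apply functional_extensionality; intro x; apply propositional_extensionality; split.
  - intros [[U [HU HUP]] Hx]. exact (HUP x Hx).
  - intro Hx. destruct (H x Hx) as [U [HU [HUx HUP]]].
    exists (exist _ U (conj HU HUP)). exact HUx.
Qed.

Definition adherent (Y : TopSemigroup) (A : Y -> Prop) (y : Y) : Prop :=
  forall U, ts_open Y U -> U y -> exists z, A z /\ U z.

Lemma closed_contains_adherent (Y : TopSemigroup) (A : Y -> Prop) :
  ts_closed Y A -> forall y, adherent Y A y -> A y.
Proof.
  intros HA y Hy. apply NNPP; intro Hny.
  destruct (Hy _ HA Hny) as [z [Hz Hnz]]. exact (Hnz Hz).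
Qed.

Lemma closed_of_contains_adherent (Y : TopSemigroup) (A : Y -> Prop) :
  (forall y, adherent Y A y -> A y) -> ts_closed Y A.
Proof.
  intro HA. apply open_of_local. intros y Hny. apply NNPP; intro Hno.
  apply Hny, HA. intros U HU HUy. apply NNPP; intro Hmeet. apply Hno.
  exists U. repeat split; auto. intros w Hw Hw'. apply Hmeet. eauto.
Qed.

Definition ts_opt_mul (Y : TopSemigroup) (c : option Y) (z : Y) : Y :=
  match c with None => z | Some a => ts_mul Y a z end.

Lemma ts_opt_mul_cont (Y : TopSemigroup) (c : option Y) (z z' : Y)
  (W : Y -> Prop) : ts_open Y W -> W (ts_opt_mul Y c (ts_mul Y z z')) ->
  exists U V, ts_open Y U /\ ts_open Y V /\ U z /\ V z' /\
    forall w w', U w -> V w' -> W (ts_opt_mul Y c (ts_mul Y w w')).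
Proof.
  intros HW Hz. destruct c as [a|]; simpl in *.
  - destruct (ts_mul_cont Y a (ts_mul Y z z') W HW Hz)
      as [U1 [V1 [HU1 [HV1 [Ha [Hzz HUV1]]]]]].
    destruct (ts_mul_cont Y z z' V1 HV1 Hzz) as [U [V [HU [HV [Hu [Hv HUV]]]]]].
    exists U, V; repeat split; auto.
  - exact (ts_mul_cont Y z z' W HW Hz).
Qed.

Definition opt_mul (X : Semigroup) (c : option X) (x : X) : X :=
  match c with None => x | Some a => sg_mul X a x end.

Section ClosureOfDiscreteImage.
Variables (X E : Semigroup) (Y : TopSemigroup).
Hypothesis hE : is_semilattice E.
Hypothesis hEf : chain_finite E.
Variables (h : X -> E) (f : X -> Y).
Hypothesis hh : sg_hom X E h.
Hypothesis f_hom : forall x x', f (sg_mul X x x') = ts_mul Y (f x) (f x').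

Hypothesis f_isolated : forall x0, exists O,
  ts_open Y O /\ O (f x0) /\ forall x, O (f x) -> x = x0.

Definition adherent_to_fibre (e : E) (z : Y) : Prop :=
  forall W, ts_open Y W -> W z -> exists x, h x = e /\ W (f x).

Hypothesis fibres_closed : forall e z, adherent_to_fibre e z ->
  exists x, h x = e /\ f x = z.

Variable y : Y.
Hypothesis y_adherent : forall U, ts_open Y U -> U y -> exists x, U (f x).

Lemma f_opt_mul (c : option X) (x : X) :
  f (opt_mul X c x) = ts_opt_mul Y (option_map f c) (f x).
Proof. destruct c as [a|]; simpl; [apply f_hom | reflexivity]. Qed.

Lemma h_opt_mul_assoc (c : option X) (b b' : X) :
  h (opt_mul X c (sg_mul X b b')) = sg_mul E (h (opt_mul X c b)) (h b').
Proof. destruct c as [a|]; simpl; [rewrite sg_assoc|]; apply hh. Qed.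

Lemma h_opt_mul_idem (c : option X) (b : X) :
  h (opt_mul X c (sg_mul X b b)) = h (opt_mul X c b).
Proof.
  destruct c as [a|]; simpl; rewrite !hh, (proj2 hE); reflexivity.
Qed.

Lemma sle_opt_mul_inv (c : option X) (g : E) (b : X) :
  sle E g (h (opt_mul X c b)) -> sle E g (h b).
Proof.
  destruct c as [a|]; simpl; [rewrite hh; apply sle_mul_inv, hE | trivial].
Qed.

Lemma sle_opt_mul_mono (c : option X) (b b' : X) :
  sle E (sg_mul E (h (opt_mul X c b)) (h b')) (h (opt_mul X c b')).
Proof.
  destruct c as [a|]; simpl; rewrite ?hh.
  - apply sle_glb.
    + apply sle_trans with (sg_mul E (h a) (h b)); apply sle_mul_l, hE.
    + apply sle_mul_r, hE.
  - apply sle_mul_r, hE.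
Qed.

Definition locally_constant_at (c : option X) : Prop :=
  exists U v, ts_open Y U /\ U y /\ forall b, U (f b) -> h (opt_mul X c b) = v.

Definition reaches (c : option X) (u : E) : Prop :=
  forall W, ts_open Y W -> W y -> exists b, W (f b) /\ sle E u (h (opt_mul X c b)).

Definition rank_below (d c : option X) : Prop :=
  opt_lt (slt E) (option_map h d) (option_map h c).

Lemma rank_below_wf : well_founded rank_below.
Proof.
  exact (wf_inverse_image _ _ _ (option_map h) (opt_lt_wf _ (slt_wf E hE hEf))).
Qed.

Lemma maximal_reached (c : option X) :
  exists g, reaches c g /\ forall w, reaches c w -> sle E g w -> w = g.
Proof.
  destruct (y_adherent _ (open_full Y) I) as [b0 _].
  destruct (exists_bottom E hE hEf (h b0)) as [m Hm].
  assert (Hmr : reaches c m).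
  { intros W HW HWy. destruct (y_adherent W HW HWy) as [b Hb]. eauto. }
  destruct (wf_minimal _ (sgt_wf E hE hEf) (reaches c) m Hmr) as [g [Hg Hmax]].
  exists g. split; [exact Hg|]. intros w Hw Hgw. apply NNPP; intro Hne.
  apply (Hmax w Hw). split; [exact Hgw | intro Heq; apply Hne; symmetry; exact Heq].
Qed.

(* If near y every c b has strictly smaller rank than c, the induction
   hypothesis makes h(c b -) locally constant, with value g by maximality,
   so c b b' witnesses adherence of c y y to the fibre of g. *)
Lemma adherent_of_descent (c : option X) (g : E) (g_reached : reaches c g)
  (g_maximal : forall w, reaches c w -> sle E g w -> w = g)
  (IH : forall d, rank_below d c -> locally_constant_at d) (Uc : Y -> Prop) (HUc : ts_open Y Uc) (HUcy : Uc y)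
  (Hdesc : forall b, Uc (f b) -> rank_below (Some (opt_mul X c b)) c) :
  adherent_to_fibre g (ts_opt_mul Y (option_map f c) (ts_mul Y y y)).
Proof.
  intros W HW HWy.
  destruct (ts_opt_mul_cont Y _ y y W HW HWy) as [U [V [HU [HV [HUy [HVy HUV]]]]]].
  destruct (g_reached _ (open_inter Y _ _ HU HUc) (conj HUy HUcy))
    as [b [[HUb HUcb] Hgb]].
  destruct (IH _ (Hdesc b HUcb)) as [Ub [v [HUbo [HUby Hv]]]].
  assert (Hvg : v = g).
  { apply g_maximal.
    - intros W' HW' HW'y.
      destruct (y_adherent _ (open_inter Y _ _ HW' HUbo) (conj HW'y HUby))
        as [b' [HW'b' HUbb']].
      exists b'. split; [exact HW'b'|]. rewrite <- (Hv b' HUbb'). simpl.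
      rewrite hh. apply sle_opt_mul_mono.
    - destruct (g_reached Ub HUbo HUby) as [b1 [Hb1 Hgb1]].
      rewrite <- (Hv b1 Hb1). simpl. rewrite hh.
      apply sle_glb; [exact Hgb | exact (sle_opt_mul_inv c g b1 Hgb1)]. }
  destruct (y_adherent _ (open_inter Y _ _ HV HUbo) (conj HVy HUby))
    as [b' [HVb' HUbb']].
  exists (opt_mul X c (sg_mul X b b')). split.
  - rewrite h_opt_mul_assoc, <- hh, <- Hvg. exact (Hv b' HUbb').
  - rewrite f_opt_mul, f_hom. apply HUV; assumption.
Qed.

(* For g maximal among the values reached by c, c y y is adherent to the fibre
   of g: either a := c lies in that fibre itself, or near y the rank drops. *)
Lemma adherent_of_maximal (c : option X) (g : E) (g_reached : reaches c g)
  (g_maximal : forall w, reaches c w -> sle E g w -> w = g)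
  (IH : forall d, rank_below d c -> locally_constant_at d) :
  adherent_to_fibre g (ts_opt_mul Y (option_map f c) (ts_mul Y y y)).
Proof.
  destruct c as [a|].
  2: { apply (adherent_of_descent None g g_reached g_maximal IH
                (fun _ => True) (open_full Y) I).
       intros b _. exact I. }
  destruct (classic (h a = g)) as [Hag|Hag].
  - intros W HW HWy.
    destruct (ts_opt_mul_cont Y _ y y W HW HWy) as [U [V [HU [HV [HUy [HVy HUV]]]]]].
    destruct (g_reached U HU HUy) as [b [HUb Hgb]].
    destruct (g_reached V HV HVy) as [b' [HVb' Hgb']].
    simpl in Hgb, Hgb'. rewrite hh, <- Hag in Hgb, Hgb'.
    apply sle_self_mul in Hgb, Hgb'; try exact hE.
    exists (opt_mul X (Some a) (sg_mul X b b')). split.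
    + simpl. rewrite !hh, sg_assoc, Hgb, Hgb'. exact Hag.
    + rewrite f_opt_mul, f_hom. apply HUV; assumption.
  - assert (Hescape : exists W, ts_open Y W /\ W y /\
              forall b, W (f b) -> ~ sle E (h a) (h (sg_mul X a b))).
    { apply NNPP; intro Hno. apply Hag, g_maximal.
      - intros W HW HWy. apply NNPP; intro Hnb. apply Hno.
        exists W. repeat split; auto. intros b Hb Hle. apply Hnb. eauto.
      - destruct (g_reached _ (open_full Y) I) as [b1 [_ Hb1]].
        apply sle_trans with (h (sg_mul X a b1)); [exact Hb1|].
        rewrite hh. apply sle_mul_l, hE. }
    destruct Hescape as [W [HW [HWy Hdrop]]].
    apply (adherent_of_descent (Some a) g g_reached g_maximal IH W HW HWy).
    intros b Hb. unfold rank_below; simpl. rewrite hh. split.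
    + apply sle_mul_l, hE.
    + intro Heq. apply (Hdrop b Hb). rewrite hh, Heq. apply sle_refl, hE.
Qed.

(* Adherence of c y y to a fibre makes b |-> h(c b) locally constant near y:
   c y y = f(x0) is isolated in f(X), so c b b = x0 for b near y. *)
Lemma locally_constant_of_adherent (c : option X) (g : E) :
  adherent_to_fibre g (ts_opt_mul Y (option_map f c) (ts_mul Y y y)) ->
  locally_constant_at c.
Proof.
  intro Hadh.
  destruct (fibres_closed _ _ Hadh) as [x0 [Hx0g Hx0]].
  destruct (f_isolated x0) as [O [HO [HOx0 HOx]]].
  rewrite Hx0 in HOx0.
  destruct (ts_opt_mul_cont Y _ y y O HO HOx0) as [U [V [HU [HV [HUy [HVy HUV]]]]]].
  exists (fun z => U z /\ V z), g. split; [apply open_inter; assumption|].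
  split; [split; assumption|]. intros b [HUb HVb].
  assert (Hbb : opt_mul X c (sg_mul X b b) = x0).
  { apply HOx. rewrite f_opt_mul, f_hom. apply HUV; assumption. }
  rewrite <- h_opt_mul_idem, Hbb. exact Hx0g.
Qed.

Lemma locally_constant_everywhere (c : option X) : locally_constant_at c.
Proof.
  induction (rank_below_wf c) as [c _ IH].
  destruct (maximal_reached c) as [g [Hg Hgmax]].
  apply (locally_constant_of_adherent c g).
  exact (adherent_of_maximal c g Hg Hgmax IH).
Qed.

(* For c = 1 the value of h is locally constant near y, so y is adherent to a
   single fibre and therefore lies in f(X). *)
Theorem adherent_in_image : exists x, f x = y.
Proof.
  destruct (locally_constant_everywhere None) as [U [v [HU [HUy Hv]]]].
  destruct (fibres_closed v y) as [x [_ Hx]]; [|exists x; exact Hx].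
  intros W HW HWy.
  destruct (y_adherent _ (open_inter Y _ _ HW HU) (conj HWy HUy)) as [x [HWx HUx]].
  exists x. split; [exact (Hv x HUx) | exact HWx].
Qed.

End ClosureOfDiscreteImage.

Lemma embedding_isolated (X : Semigroup) (Y : TopSemigroup) (f : X -> Y) :
  ts_embedding (discrete_ts X) Y f ->
  forall x0, exists O, ts_open Y O /\ O (f x0) /\ forall x, O (f x) -> x = x0.
Proof.
  intros [_ [_ [_ f_open]]] x0.
  destruct (f_open (fun x => x = x0) I) as [O [HO HOx]].
  exists O. split; [exact HO|]. split; [apply HOx; reflexivity|].
  intros x Hx. apply HOx. exact Hx.
Qed.

Lemma fibre_embedding (X E : Semigroup) (h : X -> E) (hh : sg_hom X E h)
  (e : E) (he : sg_mul E e e = e) (Y : TopSemigroup) (f : X -> Y) :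
  ts_embedding (discrete_ts X) Y f ->
  ts_embedding (discrete_ts (preimage_sg X E h hh e he)) Y
    (fun s => f (proj1_sig s)).
Proof.
  intros [f_hom [f_inj [_ f_open]]].
  assert (Hval : forall s t : preimage_sg X E h hh e he,
             proj1_sig s = proj1_sig t -> s = t).
  { apply eq_sig_hprop. intros x p q. apply proof_irrelevance. }
  split; [|split; [|split]].
  - intros s t. exact (f_hom (proj1_sig s) (proj1_sig t)).
  - intros s t Heq. exact (Hval s t (f_inj _ _ Heq)).
  - intros; exact I.
  - intros U _.
    destruct (f_open (fun x => exists s, proj1_sig s = x /\ U s) I) as [V [HV HVx]].
    exists V. split; [exact HV|]. intro s. split; intro Hs.
    + apply HVx. exists s. split; [reflexivity | exact Hs].
    + apply HVx in Hs. destruct Hs as [s' [Heq HUs']].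
      rewrite <- (Hval s' s Heq). exact HUs'.
Qed.

Lemma fibre_image_closed (C : TopSemigroup -> Prop) (X E : Semigroup)
  (h : X -> E) (hh : sg_hom X E h) (e : E) (he : sg_mul E e e = e)
  (hfib : sg_C_closed C (preimage_sg X E h hh e he))
  (Y : TopSemigroup) (HCY : C Y) (f : X -> Y)
  (f_emb : ts_embedding (discrete_ts X) Y f) (z : Y) :
  (forall W, ts_open Y W -> W z -> exists x, h x = e /\ W (f x)) ->
  exists x, h x = e /\ f x = z.
Proof.
  intro Hz.
  pose proof (hfib Y HCY _ (fibre_embedding X E h hh e he Y f f_emb)) as Hclosed.
  destruct (closed_contains_adherent Y _ Hclosed z) as [s Hs].
  - intros W HW HWz. destruct (Hz W HW HWz) as [x [Hxe HWx]].
    exists (f x). split; [exists (exist _ x Hxe); reflexivity | exact HWx].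
  - exists (proj1_sig s). split; [exact (proj2_sig s) | exact Hs].
Qed.

Theorem theorem1p4 (C : TopSemigroup -> Prop)
  (hzC : forall Y, in_TzS Y -> C Y) (hC1 : forall Y, C Y -> in_T1S Y)
  (X E : Semigroup) (hE : is_semilattice E) (hEf : chain_finite E)
  (h : X -> E) (hh : sg_hom X E h)
  (hfib : forall e : E, sg_C_closed C (preimage_sg X E h hh e (proj2 hE e))) :
  sg_C_closed C X.
Proof.
  intros Y HCY f f_emb.
  apply closed_of_contains_adherent. intros y Hy.
  apply (adherent_in_image X E Y hE hEf h f hh).
  - exact (proj1 f_emb).
  - exact (embedding_isolated X Y f f_emb).
  - intros e z Hz.
    exact (fibre_image_closed C X E h hh e (proj2 hE e) (hfib e) Y HCY f f_emb z Hz).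
  - intros U HU HUy. destruct (Hy U HU HUy) as [z [[x <-] HUx]]. exists x. exact HUx.
Qed.
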